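(* For $n\le 5$ (with $n\ge 4$), any two distinct vertices of $\mathrm{PYR}(n)$ are adjacent, i.e. the skeleton of $\mathrm{PYR}(n)$ is a complete graph. For $n\ge 6$, $\mathrm{PYR}(n)$ has a pair of non-adjacent vertices; e.g. for $n=6$ the vertices with codes $\langle 1,0,0\rangle$ and $\langle 0,1,0\rangle$ are non-adjacent.
   Context: Let $K_n$ be the complete undirected graph on vertex set $\{1,\dots,n\}$ with edge set $E$. A Hamiltonian cycle $\langle 1,i_1,\dots,i_r,n,j_1,\dots,j_{n-r-2}\rangle$ is called a pyramidal tour if $i_1<i_2<\dots<i_r$ and $j_1>j_2>\dots>j_{n-r-2}$; tours are undirected. Let $PT_n$ be the set of all pyramidal tours. For $x\in PT_n$ its characteristic vector $x^v\in\mathbb{R}^E$ has $x^v_e=1$ if edge $e$ lies in $x$ and $0$ otherwise. The pyramidal tours polytope is $\mathrm{PYR}(n)=\operatorname{conv}\{x^v : x\in PT_n\}$. Every pyramidal tour contains the edge $\{1,2\}$; the tour is oriented so that vertex $2$ belongs to the increasing part. The code of $x$ is the $0/1$ vector $x^c=(x^c_3,\dots,x^c_{n-1})$ with $x^c_i=1$ if vertex $i$ is visited in the increasing part of $x$ and $x^c_i=0$ otherwise; $x\mapsto x^c$ is a bijection from $PT_n$ onto $\{0,1\}^{n-3}$. Two vertices are adjacent if the segment joining them is a one-dimensional face of the polytope. *)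

From HB Require Import structures.
From mathcomp Require Import all_boot all_order all_algebra.
Set Implicit Arguments. Unset Strict Implicit. Unset Printing Implicit Defensive.
Import Order.TTheory GRing.Theory Num.Theory.
Local Open Scope ring_scope.

(* Vertices 1..n of K_n are represented by ordinals 0..n-1 of 'I_n
   (vertex k  <->  ordinal with value k-1). *)

Definition edge (n : nat) := {e : 'I_n * 'I_n | (e.1 < e.2)%N}.

(* A tour is written as the sequence of its vertices starting from vertex 1.
   [pyramidal n s]: s is a Hamiltonian cycle <1, i_1..i_r, n, j_1..j_m>
   with i_1 < ... < i_r and j_1 > ... > j_m. *)
Definition pyramidal (n : nat) (s : seq 'I_n) : Prop :=
  perm_eq s (enum 'I_n) /\
  exists a b : seq nat,
    map val s = 0%N :: a ++ n.-1 :: b /\ sorted ltn a /\ sorted gtn b.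

Definition incr_part (n : nat) (s : seq 'I_n) : seq nat :=
  let s' := map val s in take (index n.-1 s') (behead s').

(* The code x^c = (x^c_3, ..., x^c_{n-1}): the tour is oriented so that
   vertex 2 (value 1) lies in the increasing part; x^c_i = 1 iff vertex i
   (value i-1) is in the increasing part. *)
Definition code (n : nat) (s : seq 'I_n) : seq bool :=
  let a := incr_part s in
  [seq (if (1%N \in a) then i \in a else i \notin a) | i <- iota 2 (n - 3)%N].

Definition tour_has_edge (n : nat) (s : seq 'I_n) (e : edge n) : bool :=
  has (fun p : 'I_n * 'I_n =>
         ((p.1 == (val e).1) && (p.2 == (val e).2)) ||
         ((p.1 == (val e).2) && (p.2 == (val e).1)))
      (zip s (rot 1 s)).

Definition charv (R : realFieldType) (n : nat) (s : seq 'I_n) : edge n -> R :=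
  fun e => if tour_has_edge s e then 1 else 0.

Definition dotE (R : realFieldType) (n : nat) (c p : edge n -> R) : R :=
  \sum_(e : edge n) c e * p e.

Definition in_PYR (R : realFieldType) (n : nat) (p : edge n -> R) : Prop :=
  exists (ts : seq (seq 'I_n)) (w : seq R),
    (forall t, t \in ts -> pyramidal t) /\
    size w = size ts /\
    (forall l, l \in w -> 0 <= l) /\
    \sum_(l <- w) l = 1 /\
    p = (fun e => \sum_(i < size ts) nth 0 w i * charv R (nth [::] ts i) e).

Definition in_segment (R : realFieldType) (n : nat) (u v p : edge n -> R) : Prop :=
  exists t : R, 0 <= t <= 1 /\ p = (fun e => t * u e + (1 - t) * v e).

Definition adjacent (R : realFieldType) (n : nat) (u v : edge n -> R) : Prop :=
  u <> v /\
  exists c : edge n -> R, forall p : edge n -> R,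
    (in_PYR p /\ forall q, in_PYR q -> dotE c q <= dotE c p) <-> in_segment u v p.

From mathcomp Require Import all_boot all_order all_algebra.
From mathcomp Require Import ring lra zify.
From Stdlib Require Import FunctionalExtensionality.
Import Order.TTheory GRing.Theory Num.Theory.
Set Implicit Arguments. Unset Strict Implicit. Unset Printing Implicit Defensive.
Local Open Scope ring_scope.

(* A functional that is maximised over the vertices of a polytope at exactly two
   of them exposes the segment between them as a face.  For n = 4, 5 the
   functional x^v + y^v does this for any two distinct pyramidal tours x, y,
   which is checked by evaluation over the few pyramidal tours.

   For n >= 6 take x = <1,4,5,6,...,n,3,2> and y = <1,3,5,6,...,n,4,2>, and
   x' = <1,2,4,5,...,n,3>, y' = <1,2,3,5,...,n,4>.  Both pairs share the run
   5,6,...,n and, outside it, use the same multiset of edges, so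
   x^v + y^v = x'^v + y'^v: the midpoint of [x, y] is the midpoint of [x', y'].
   A face containing that midpoint contains x', which is neither x nor y, so
   [x, y] is not a face.  For n = 6, x and y are the tours with codes <1,0,0>
   and <0,1,0>; a code determines a tour up to orientation, hence its
   characteristic vector (checked by evaluation). *)

(* [insub] decides membership through the opaque [idP], so it is stuck under
   [vm_compute]; [cinsub] is the same function with a transparent decision. *)
Definition cinsub (T : Type) (P : pred T) (sT : subType P) (x : T) : option sT :=
  (if P x as b return P x = b -> option sT then fun Px => Some (Sub x Px)
   else fun _ => None) (erefl (P x)).
Arguments cinsub {T P sT} x.

Lemma cinsubE {T : Type} {P : pred T} {sT : subType P} : @cinsub T P sT =1 insub.
Proof.
move=> x; rewrite /cinsub; case: insubP => [u _ <- | nPx];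
  move: (erefl _); case: {2 3}(P _) => // E.
- by congr Some; apply: val_inj; rewrite SubK.
- by rewrite valP in E.
- by rewrite E in nPx.
Qed.

Definition ord_enumc n : seq 'I_n := pmap cinsub (iota 0 n).

Lemma ord_enumcE n : ord_enumc n = ord_enum n.
Proof. exact/eq_pmap/cinsubE. Qed.

Definition edge_enum n : seq (edge n) :=
  pmap cinsub [seq (i, j) | i <- ord_enumc n, j <- ord_enumc n].

Lemma edge_enumE n :
  edge_enum n = pmap insub [seq (i, j) | i <- ord_enum n, j <- ord_enum n].
Proof. by rewrite /edge_enum ord_enumcE; apply/eq_pmap/cinsubE. Qed.

Lemma mem_edge_enum n (e : edge n) : e \in edge_enum n.
Proof.
rewrite edge_enumE mem_pmap_sub; case: (val e) => i j.
by apply/allpairsP; exists (i, j); rewrite /= !mem_ord_enum.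
Qed.

Lemma edge_enum_uniq n : uniq (edge_enum n).
Proof.
rewrite edge_enumE; apply/pmap_sub_uniq/allpairs_uniq; rewrite ?ord_enum_uniq //.
by move=> [? ?] [? ?] _ _ [-> ->].
Qed.

Lemma perm_index_edge_enum n : perm_eq (index_enum (edge n)) (edge_enum n).
Proof.
apply: uniq_perm; rewrite ?index_enum_uniq ?edge_enum_uniq // => e.
by rewrite mem_index_enum mem_edge_enum.
Qed.

Definition same_edges n (x y : seq 'I_n) : bool :=
  all (fun e => tour_has_edge x e == tour_has_edge y e) (edge_enum n).

Section Polytope.
Variables (R : realFieldType) (n : nat).
Implicit Types (x y z : seq 'I_n) (c u v p q : edge n -> R).

Lemma charvE x e : charv R x e = (tour_has_edge x e)%:R.
Proof. by rewrite /charv; case: tour_has_edge. Qed.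

Lemma charv_eqP x y : reflect (charv R x = charv R y) (same_edges x y).
Proof.
apply: (iffP allP) => [xy | xy e _].
  apply: functional_extensionality => e.
  by rewrite !charvE (eqP (xy e (mem_edge_enum e))).
move/(congr1 (fun f => f e))/eqP: xy; rewrite !charvE eqr_nat.
by case: tour_has_edge; case: tour_has_edge.
Qed.

Lemma charv_neq x y e :
  tour_has_edge x e != tour_has_edge y e -> charv R x <> charv R y.
Proof.
move=> xyNe /charv_eqP/allP/(_ e (mem_edge_enum e))/eqP xye.
by rewrite xye eqxx in xyNe.
Qed.

Lemma dotED c u v : dotE c (fun e => u e + v e) = dotE c u + dotE c v.
Proof. by rewrite /dotE -big_split; apply: eq_bigr => e _; rewrite mulrDr. Qed.

Lemma dotE_segment c u v a b :
  dotE c (fun e => a * u e + b * v e) = a * dotE c u + b * dotE c v.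
Proof.
rewrite dotED /dotE !mulr_sumr.
by congr (_ + _); apply: eq_bigr => e _; rewrite mulrCA.
Qed.

Lemma dotE_hull c ts (w : seq R) :
  dotE c (fun e => \sum_(i < size ts) nth 0 w i * charv R (nth [::] ts i) e) =
  \sum_(i < size ts) nth 0 w i * dotE c (charv R (nth [::] ts i)).
Proof.
rewrite /dotE; under eq_bigr do rewrite mulr_sumr.
rewrite exchange_big; apply: eq_bigr => i _; rewrite mulr_sumr.
by apply: eq_bigr => e _; rewrite mulrCA.
Qed.

Lemma in_PYR_segment x y t : pyramidal x -> pyramidal y -> 0 <= t <= 1 ->
  in_PYR (fun e => t * charv R x e + (1 - t) * charv R y e).
Proof.
move=> Px Py /andP[t_ge0 t_le1]; exists [:: x; y], [:: t; 1 - t].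
split; first by move=> z; rewrite !inE => /orP[] /eqP ->.
split=> //; split.
  by move=> l; rewrite !inE => /orP[] /eqP ->; rewrite ?subr_ge0.
split; first by rewrite !big_cons big_nil addr0 addrC subrK.
by apply: functional_extensionality => e; rewrite !big_ord_recl big_ord0 addr0.
Qed.

Lemma in_PYR_charv x : pyramidal x -> in_PYR (charv R x).
Proof.
move=> Px; have -> : charv R x = (fun e => 1 * charv R x e + (1 - 1) * charv R x e).
  by apply: functional_extensionality => e; rewrite subrr mul0r addr0 mul1r.
by apply: in_PYR_segment; rewrite ?ler01 ?lexx.
Qed.

Lemma sum_nth_weights (w : seq R) m :
  size w = m -> \sum_(i < m) nth 0 w i = \sum_(l <- w) l.
Proof. by move=> <-; rewrite (big_nth 0) big_mkord. Qed.

Lemma dotE_PYR_le c M q : (forall z, pyramidal z -> dotE c (charv R z) <= M) ->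
  in_PYR q -> dotE c q <= M.
Proof.
move=> c_le [ts [w [Pts [w_size [w_ge0 [w_sum1 ->]]]]]].
rewrite dotE_hull (@le_trans _ _ (\sum_(i < size ts) nth 0 w i * M)) //.
  apply: ler_sum => i _; apply: ler_wpM2l.
    by apply: w_ge0; rewrite mem_nth ?w_size.
  by apply/c_le/Pts; rewrite mem_nth.
by rewrite -mulr_suml sum_nth_weights // w_sum1 mul1r.
Qed.

(* Both endpoints being 0/1 vectors, a 0/1 coordinate where they differ
   forces the parameter of the segment to be 0 or 1. *)
Lemma segment_charv x y z : in_segment (charv R x) (charv R y) (charv R z) ->
  charv R z = charv R x \/ charv R z = charv R y.
Proof.
case=> t [_ zE].
have zeE e : charv R z e = t * charv R x e + (1 - t) * charv R y e by rewrite zE.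
have [/charv_eqP xy | /allPn [e _ xNy]] := boolP (same_edges x y).
  by left; rewrite zE xy; apply: functional_extensionality => e; ring.
have [t1 | t0] : t = 1 \/ t = 0.
  move: (zeE e) xNy; rewrite !charvE.
  by case: tour_has_edge; case: tour_has_edge; case: tour_has_edge => //= tE _;
     first [by left; lra | by right; lra].
- by left; rewrite zE t1; apply: functional_extensionality => f; ring.
- by right; rewrite zE t0; apply: functional_extensionality => f; ring.
Qed.

Lemma in_segment_hull x y ts (w : seq R) :
  (forall i : 'I_(size ts), 0 <= nth 0 w i) -> \sum_(i < size ts) nth 0 w i = 1 ->
  (forall i : 'I_(size ts), nth 0 w i != 0 ->
     charv R (nth [::] ts i) = charv R x \/ charv R (nth [::] ts i) = charv R y) ->
  in_segment (charv R x) (charv R y)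
    (fun e => \sum_(i < size ts) nth 0 w i * charv R (nth [::] ts i) e).
Proof.
move=> w_ge0 w_sum1 w_ends.
pose t := \sum_(i < size ts) nth 0 w i * (same_edges (nth [::] ts i) x)%:R.
exists t; split.
  rewrite sumr_ge0 => [|i _]; last by rewrite mulr_ge0.
  rewrite -w_sum1 ler_sum // => i _.
  by case: same_edges; rewrite ?mulr1 ?mulr0.
apply: functional_extensionality => e.
rewrite -[X in X - t]w_sum1 -sumrB !mulr_suml -big_split; apply: eq_bigr => i _ /=.
case xi: (same_edges _ x) => /=; first by rewrite (charv_eqP _ _ xi); ring.
have [->|/w_ends [xiE|->]] := eqVneq (nth 0 w i) 0; first by ring.
  by move/charv_eqP: xiE; rewrite xi.
by ring.
Qed.

Lemma adjacent_of_maximizers x y c M :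
  pyramidal x -> pyramidal y -> charv R x <> charv R y ->
  (forall z, pyramidal z -> dotE c (charv R z) <= M) ->
  dotE c (charv R x) = M -> dotE c (charv R y) = M ->
  (forall z, pyramidal z -> dotE c (charv R z) = M ->
     charv R z = charv R x \/ charv R z = charv R y) ->
  adjacent (charv R x) (charv R y).
Proof.
move=> Px Py xNy c_le cx cy c_eq; split=> //; exists c => p; split; last first.
  case=> t [t01 ->]; split; first exact: in_PYR_segment.
  move=> q /(dotE_PYR_le c_le); rewrite dotE_segment cx cy.
  by rewrite -mulrDl addrC subrK mul1r.
case=> [[ts [w [Pts [w_size [w_ge0 [w_sum1 pE]]]]]] p_max].
have {}w_ge0 (i : 'I_(size ts)) : 0 <= nth 0 w i.
  by apply: w_ge0; rewrite mem_nth ?w_size.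
have {}w_sum1 : \sum_(i < size ts) nth 0 w i = 1 by rewrite sum_nth_weights.
have Pts_i (i : 'I_(size ts)) : pyramidal (nth [::] ts i) by apply/Pts/mem_nth.
have slack_ge0 (i : 'I_(size ts)) :
    0 <= nth 0 w i * (M - dotE c (charv R (nth [::] ts i))).
  by rewrite mulr_ge0 ?subr_ge0 ?c_le.
(* The weighted slacks are nonnegative and sum to M - c.p <= 0. *)
have slack0 :
    \sum_(i < size ts) nth 0 w i * (M - dotE c (charv R (nth [::] ts i))) = 0.
  apply/eqP; rewrite eq_le sumr_ge0 ?andbT => [|i _] //.
  under eq_bigr do rewrite mulrBr.
  rewrite sumrB -mulr_suml w_sum1 mul1r -dotE_hull -pE subr_le0 -cx.
  exact: p_max (in_PYR_charv Px).
rewrite pE; apply: in_segment_hull => // i wi_neq0; apply: c_eq => //.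
have := psumr_eq0P (fun j _ => slack_ge0 j) slack0; move/(_ i isT)/eqP.
by rewrite mulf_eq0 (negPf wi_neq0) subr_eq0 => /eqP.
Qed.

Lemma not_adjacent_of_charvD x y x' y' : pyramidal x' -> pyramidal y' ->
  (forall e, charv R x e + charv R y e = charv R x' e + charv R y' e) ->
  charv R x' <> charv R x -> charv R x' <> charv R y ->
  ~ adjacent (charv R x) (charv R y).
Proof.
move=> Px' Py' sumE x'Nx x'Ny [_ [c segE]].
have half01 : 0 <= (2^-1 : R) <= 1 by apply/andP; split; lra.
have [_ mid_max] := proj2 (segE _) (ex_intro _ 2^-1 (conj half01 erefl)).
have sum_dot : dotE c (charv R x) + dotE c (charv R y) =
               dotE c (charv R x') + dotE c (charv R y').
  by rewrite -!dotED; congr dotE; apply: functional_extensionality.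
move: mid_max; rewrite dotE_segment => mid_max.
have x'_le := mid_max _ (in_PYR_charv Px'); have y'_le := mid_max _ (in_PYR_charv Py').
have /segE /segment_charv [] // : in_PYR (charv R x') /\
    forall q, in_PYR q -> dotE c q <= dotE c (charv R x').
split=> [|q /mid_max]; first exact: in_PYR_charv.
lra.
Qed.
End Polytope.

Definition pyramidalb n (s : seq 'I_n) : bool :=
  let v := behead (map val s) in let k := index n.-1 v in
  [&& head 1%N (map val s) == 0%N, sorted ltn (take k v) & sorted gtn (drop k.+1 v)].

Lemma pyramidalP n (s : seq 'I_n) : pyramidal s -> pyramidalb s.
Proof.
case=> s_perm [a [b [sE [a_sorted b_sorted]]]].
have : uniq (map val s) by rewrite (map_inj_uniq val_inj) (perm_uniq s_perm) enum_uniq.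
rewrite /pyramidalb sE /= cat_uniq /= negb_or => /and4P[_ _ /andP[a_nmax _] _].
by rewrite index_cat (negPf a_nmax) /= eqxx addn0 take_size_cat // drop_cat
  ltnNge leqnSn /= subSnn /= drop0 a_sorted b_sorted.
Qed.

Definition pyr_tours n : seq (seq 'I_n) :=
  [seq s <- permutations (ord_enumc n) | pyramidalb s].

Lemma mem_pyr_tours n (s : seq 'I_n) : pyramidal s -> s \in pyr_tours n.
Proof.
move=> Ps; rewrite mem_filter pyramidalP //= mem_permutations ord_enumcE.
apply: perm_trans (proj1 Ps) (uniq_perm _ _ _); rewrite ?enum_uniq ?ord_enum_uniq //.
by move=> i; rewrite mem_enum mem_ord_enum.
Qed.

Definition pair_score n (x y z : seq 'I_n) : nat :=
  sumn [seq ((tour_has_edge x e + tour_has_edge y e) * tour_has_edge z e)%N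
       | e <- edge_enum n].

Lemma dotE_pair_score (R : realFieldType) n (x y z : seq 'I_n) :
  dotE (fun e => charv R x e + charv R y e) (charv R z) = (pair_score x y z)%:R.
Proof.
rewrite /dotE /pair_score sumnE big_map natr_sum (perm_big _ (perm_index_edge_enum n)).
by apply: eq_bigr => e _; rewrite !charvE natrM natrD.
Qed.

(* For distinct x, y the functional x^v + y^v attains its maximum over the
   pyramidal tours exactly at x and y. *)
Definition skeleton_complete_cert n : bool :=
  all (fun x => all (fun y => same_edges x y ||
    let M := pair_score x y x in
    (pair_score x y y == M) &&
    all (fun z => (pair_score x y z <= M)%N &&
                  ((pair_score x y z == M) ==> same_edges z x || same_edges z y))
        (pyr_tours n)) (pyr_tours n)) (pyr_tours n).

Lemma adjacent_of_cert (R : realFieldType) n : skeleton_complete_cert n ->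
  forall x y : seq 'I_n, pyramidal x -> pyramidal y ->
  charv R x <> charv R y -> adjacent (charv R x) (charv R y).
Proof.
move=> /allP cert x y Px Py xNy.
have /allP/(_ y (mem_pyr_tours Py)) := cert x (mem_pyr_tours Px).
case/orP => [/charv_eqP //|/andP[/eqP yM /allP zM]].
apply: (adjacent_of_maximizers (c := fun e => charv R x e + charv R y e)
          (M := (pair_score x y x)%:R)) => //; rewrite ?dotE_pair_score ?yM //.
- move=> z Pz; rewrite dotE_pair_score ler_nat.
  by case/andP: (zM z (mem_pyr_tours Pz)).
- move=> z Pz; rewrite dotE_pair_score => /eqP; rewrite eqr_nat => zmax.
  case/andP: (zM z (mem_pyr_tours Pz)) => _ /implyP/(_ zmax)/orP[] zE;
    [left | right]; exact/charv_eqP.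
Qed.

Lemma skeleton_complete_cert4 : skeleton_complete_cert 4. Proof. by vm_compute. Qed.
Lemma skeleton_complete_cert5 : skeleton_complete_cert 5. Proof. by vm_compute. Qed.

Definition tour_of n (l : seq nat) : seq 'I_n := pmap cinsub l.

Lemma val_tour_of n l : all (fun i => i < n)%N l -> map val (tour_of n l) = l.
Proof.
move=> l_lt; rewrite /tour_of (eq_pmap cinsubE) (pmap_filter (insubK _)).
by rewrite (eq_filter (isSome_insub _)); apply/all_filterP.
Qed.

Definition joins (u v : nat) (p : nat * nat) : bool :=
  ((p.1 == u) && (p.2 == v)) || ((p.1 == v) && (p.2 == u)).

Lemma tour_has_edge_val n (s : seq 'I_n) (e : edge n) :
  tour_has_edge s e =
  has (joins (val e).1 (val e).2) (zip (map val s) (rot 1 (map val s))).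
Proof.
have zip_val t : zip (map val s) (map val t) = [seq (val p.1, val p.2) | p <- zip s t].
  by elim: s t => [|a s' IH] [|b t] //=; rewrite IH.
by rewrite -map_rot zip_val has_map.
Qed.

Lemma zip_rot1 (T : Type) (x : T) s :
  zip (x :: s) (rot 1 (x :: s)) = pairmap pair x (rcons s x).
Proof.
rewrite rot1_cons; elim: s {-2 4}x => [|y s IH] z //=.
by rewrite IH.
Qed.

Lemma pairmap_iota m k :
  pairmap pair m (iota m.+1 k) = [seq (i, i.+1) | i <- iota m k].
Proof. by elim: k m => [|k IH] m //=; rewrite IH. Qed.

Lemma has_joins_iota m k u v : (u < v)%N ->
  has (joins u v) [seq (i, i.+1) | i <- iota m k] =
  [&& m <= u, u < m + k & v == u.+1]%N.
Proof.
move=> uv; rewrite has_map; apply/hasP/idP => [[i] | /and3P[mu uk /eqP ->]].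
  rewrite mem_iota /joins /= => /andP[mi ik] /orP[] /andP[/eqP iu /eqP iv]; subst u v.
    by rewrite mi ik eqxx.
  by rewrite ltnNge leqnSn in uv.
by exists u; rewrite ?mem_iota ?mu ?uk //= /joins !eqxx.
Qed.

Definition tour_with_run m (A B : seq nat) : seq 'I_(6 + m) :=
  tour_of (6 + m) (0%N :: A ++ iota 5 m.+1 ++ B).

Section TourWithRun.
Variables (m : nat) (A B : seq nat).
Hypothesis AB_perm : perm_eq (0%N :: A ++ B) (iota 0 5).
Hypothesis A_last : last 0%N A = 4%N.

Lemma perm_tour_with_run : perm_eq (0%N :: A ++ iota 5 m.+1 ++ B) (iota 0 (6 + m)).
Proof.
rewrite addSnnS iotaD -cat_cons perm_catCA perm_catC add0n perm_cat2r.
by rewrite cat_cons.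
Qed.

Lemma val_tour_with_run : map val (tour_with_run m A B) = 0%N :: A ++ iota 5 m.+1 ++ B.
Proof.
by apply: val_tour_of; apply/allP => i; rewrite (perm_mem perm_tour_with_run) mem_iota.
Qed.

Lemma pyramidal_tour_with_run : sorted ltn A -> sorted gtn B ->
  pyramidal (tour_with_run m A B).
Proof.
move=> A_sorted B_sorted; split.
  apply: (@perm_map_inj _ _ val val_inj).
  by rewrite val_tour_with_run val_enum_ord perm_tour_with_run.
exists (A ++ iota 5 m), B; split.
  by rewrite val_tour_with_run -[m.+1]addn1 iotaD -!catA addSn.
split=> //; move: A_sorted A_last; case: A => [|a A'] //= A'_path A'_last.
by rewrite cat_path A'_path A'_last; exact: (iota_ltn_sorted 4 m.+1).
Qed.

Lemma tour_with_run_has_edge (e : edge (6 + m)) :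
  let u := val (val e).1 in let v := val (val e).2 in
  tour_has_edge (tour_with_run m A B) e =
  [|| has (joins u v) (pairmap pair 0%N A), [&& 4 <= u, u < 5 + m & v == u.+1]%N |
      has (joins u v) (pairmap pair (5 + m)%N (rcons B 0%N))].
Proof.
rewrite /= tour_has_edge_val val_tour_with_run zip_rot1 !rcons_cat !pairmap_cat A_last.
have last_iota i k : last i (iota i.+1 k) = (i + k)%N.
  by elim: k i => [|k IH] i /=; rewrite ?addn0 // IH addSnnS.
rewrite pairmap_iota last_iota -addSnnS.
by rewrite !has_cat has_joins_iota ?addnS //; exact: (valP e).
Qed.

End TourWithRun.

Definition run_x m := tour_with_run m [:: 3; 4]%N [:: 2; 1]%N.
Definition run_y m := tour_with_run m [:: 2; 4]%N [:: 3; 1]%N.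
Definition run_x' m := tour_with_run m [:: 1; 3; 4]%N [:: 2]%N.
Definition run_y' m := tour_with_run m [:: 1; 2; 4]%N [:: 3]%N.

Lemma pyramidal_run_tours m :
  [/\ pyramidal (run_x m), pyramidal (run_y m),
      pyramidal (run_x' m) & pyramidal (run_y' m)].
Proof. by split; apply: pyramidal_tour_with_run. Qed.

Lemma run_tours_charvD (R : realFieldType) m e :
  charv R (run_x m) e + charv R (run_y m) e =
  charv R (run_x' m) e + charv R (run_y' m) e.
Proof.
rewrite !charvE -!natrD; congr (_%:R).
rewrite !tour_with_run_has_edge //=.
have := valP e; have := ltn_ord (val e).2.
move: (val (val e).1) (val (val e).2) => u v.
by case: u => [|[|[|[|u]]]]; case: v => [|[|[|[|[|v]]]]] //=; lia.
Qed.

Definition small_edge m (i j : nat) (ij : (i < j)%N) (j6 : (j < 6)%N) : edge (6 + m) :=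
  exist _ (Ordinal (leq_trans (ltn_trans ij j6) (leq_addr m 6)),
           Ordinal (leq_trans j6 (leq_addr m 6))) ij.

Lemma run_x_neq_y (R : realFieldType) m : charv R (run_x m) <> charv R (run_y m).
Proof.
apply: (charv_neq (e := small_edge m (isT : 1 < 2)%N isT)).
by rewrite !tour_with_run_has_edge.
Qed.

Lemma not_adjacent_run_tours (R : realFieldType) m :
  ~ adjacent (charv R (run_x m)) (charv R (run_y m)).
Proof.
have [_ _ Px' Py'] := pyramidal_run_tours m.
apply: (not_adjacent_of_charvD Px' Py' (@run_tours_charvD R m)).
  apply: (charv_neq (e := small_edge m (isT : 1 < 3)%N isT)).
  by rewrite !tour_with_run_has_edge.
apply: (charv_neq (e := small_edge m (isT : 3 < 4)%N isT)).
by rewrite !tour_with_run_has_edge.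
Qed.

Lemma code6_cert :
  all (fun z => ((code z == [:: true; false; false]) ==> same_edges z (run_x 0)) &&
                ((code z == [:: false; true; false]) ==> same_edges z (run_y 0)))
      (pyr_tours 6).
Proof. by vm_compute. Qed.

Lemma charv_code6 (R : realFieldType) (x : seq 'I_6) : pyramidal x ->
  (code x = [:: true; false; false] -> charv R x = charv R (run_x 0)) /\
  (code x = [:: false; true; false] -> charv R x = charv R (run_y 0)).
Proof.
move=> /mem_pyr_tours /(allP code6_cert) /andP[/implyP cx /implyP cy].
by split=> /eqP xc; apply/charv_eqP; [exact: cx | exact: cy].
Qed.

Unset Implicit Arguments.

Theorem mainTheorem5 (R : realFieldType) :
  (forall n : nat, (4 <= n <= 5)%N ->
     forall x y : seq 'I_n, pyramidal x -> pyramidal y ->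
       charv R x <> charv R y -> adjacent (charv R x) (charv R y)) /\
  (forall n : nat, (6 <= n)%N ->
     exists x y : seq 'I_n, pyramidal x /\ pyramidal y /\
       charv R x <> charv R y /\ ~ adjacent (charv R x) (charv R y)) /\
  (forall x y : seq 'I_6, pyramidal x -> pyramidal y ->
     code x = [:: true; false; false] -> code y = [:: false; true; false] ->
     ~ adjacent (charv R x) (charv R y)).
Proof.
split; [|split].
- move=> n /andP[n_ge4 n_le5]; have [->|->] : n = 4%N \/ n = 5%N by lia.
    exact: adjacent_of_cert skeleton_complete_cert4.
  exact: adjacent_of_cert skeleton_complete_cert5.
- move=> n n_ge6; have [m ->] : exists m, n = (6 + m)%N by exists (n - 6)%N; lia.
  have [Px Py _ _] := pyramidal_run_tours m.
  exists (run_x m), (run_y m); do !split => //.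
    exact: run_x_neq_y.
  exact: not_adjacent_run_tours.
- move=> x y Px Py xc yc.
  rewrite ((charv_code6 R Px).1 xc) ((charv_code6 R Py).2 yc).
  exact: not_adjacent_run_tours.
Qed.
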